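(* Let $(\mathfrak{A},\mathfrak{A}_0)$ be a CQ*-algebra as described in the context, and let $\omega$ be a $\|\cdot\|$-continuous positive linear functional on $\mathfrak{A}_0$ with GNS construction $(\pi_\omega,\lambda_\omega,\mathcal{H}_\omega)$. Then there exist a map $\pi_{\overline{\omega}}$ and a linear map $\lambda_{\overline{\omega}}$ such that: (1) $\pi_{\overline{\omega}}$ is a $*$-representation of the quasi *-algebra $(\mathfrak{A},\mathfrak{A}_0)$ into $\mathcal{L}^\dagger(\lambda_\omega(\mathfrak{A}_0), v(\lambda_\omega(\mathfrak{A}_0)))$ (in the Hilbert space $\mathcal{H}_{\overline{\omega}}:=\mathcal{H}_\omega$, with domain $\mathcal{D}(\pi_{\overline{\omega}})=\lambda_\omega(\mathfrak{A}_0)$), which extends $\pi_\omega$; (2) $\lambda_{\overline{\omega}}$ is a linear map from $\mathfrak{A}$ into $v(\lambda_\omega(\mathfrak{A}_0))$ which extends $\lambda_\omega$ and satisfies $\lambda_{\overline{\omega}}(XB)=\pi_{\overline{\omega}}(X)\lambda_\omega(B)$ for all $X\in\mathfrak{A}$ and $B\in\mathfrak{A}_0$.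
   Context: Let $\mathfrak{A}_0$ be a unital C*-algebra with C*-norm $\|\cdot\|_0$ and unit $I$, and let $\|\cdot\|$ be another norm on $\mathfrak{A}_0$ such that $\|A\|\le\|A\|_0$, $\|AB\|\le\|A\|\,\|B\|_0$ and $\|A^*\|=\|A\|$ for all $A,B\in\mathfrak{A}_0$. Let $\mathfrak{A}$ be the completion of $(\mathfrak{A}_0,\|\cdot\|)$, with extended norm still denoted $\|\cdot\|$. For $X\in\mathfrak{A}$, $A\in\mathfrak{A}_0$ and any sequence $A_n\in\mathfrak{A}_0$ with $\|A_n-X\|\to0$, define $XA:=\lim A_nA$, $AX:=\lim AA_n$, $X^*:=\lim A_n^*$ (limits in $\|\cdot\|$); these are well defined and make $(\mathfrak{A},\mathfrak{A}_0)$ a quasi *-algebra (i.e. $\mathfrak{A}$ is an $\mathfrak{A}_0$-bimodule with involution extending that of $\mathfrak{A}_0$, $(XA)^*=A^*X^*$, and $(AX)B=A(XB)$ etc.), called a CQ*-algebra. A linear functional $\omega$ on $\mathfrak{A}_0$ is a $\|\cdot\|$-continuous positive linear functional if $\omega(A^*A)\ge0$ for all $A$ and there is $\gamma>0$ with $|\omega(A)|\le\gamma\|A\|$ for all $A\in\mathfrak{A}_0$. $(\pi_\omega,\lambda_\omega,\mathcal{H}_\omega)$ denotes the usual GNS construction of $\omega$ on the C*-algebra $\mathfrak{A}_0$: $\lambda_\omega:\mathfrak{A}_0\to\mathcal{H}_\omega$ is linear with dense range, $(\lambda_\omega(A)|\lambda_\omega(B))=\omega(B^*A)$, and $\pi_\omega(A)\lambda_\omega(B)=\lambda_\omega(AB)$.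 Unbounded vectors: for a subspace $\mathcal{D}$ of a Hilbert space $\mathcal{H}$, $v(\mathcal{D})$ is the vector space of all conjugate-linear functionals on $\mathcal{D}$ (value of $v$ at $\xi$ written $\langle v,\xi\rangle$); each $\xi\in\mathcal{H}$ is identified with $\eta\mapsto(\xi|\eta)$. $\mathcal{L}^\dagger(\mathcal{D})$ is the *-algebra of linear operators $A$ on $\mathcal{D}$ having an adjoint $A^\dagger$ that maps $\mathcal{D}$ into $\mathcal{D}$. $\mathcal{L}^\dagger(\mathcal{D},v(\mathcal{D}))$ is the set of linear maps $\mathcal{D}\to v(\mathcal{D})$; it is a quasi *-algebra over $\mathcal{L}^\dagger(\mathcal{D})$ with $\langle AX\xi,\eta\rangle=\langle X\xi,A^\dagger\eta\rangle$, $\langle XA\xi,\eta\rangle=\langle X(A\xi),\eta\rangle$, $\langle X^\dagger\xi,\eta\rangle=\overline{\langle X\eta,\xi\rangle}$. A $*$-representation of a quasi *-algebra $(\mathscr{A},\mathscr{A}_0)$ into $\mathcal{L}^\dagger(\mathcal{D},v(\mathcal{D}))$ is a linear map $\pi$ with $\pi(ax)=\pi(a)\pi(x)$, $\pi(xa)=\pi(x)\pi(a)$, $\pi(x^* )=\pi(x)^\dagger$ for all $x\in\mathscr{A}$, $a\in\mathscr{A}_0$ (with $\pi(\mathscr{A}_0)\subset\mathcal{L}^\dagger(\mathcal{D})$). *)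

From HB Require Import structures.
From mathcomp Require Import all_boot all_order all_algebra.
From mathcomp Require Import reals complex.
Set Implicit Arguments.
Unset Strict Implicit.
Unset Printing Implicit Defensive.
Import Order.TTheory GRing.Theory Num.Theory.
Local Open Scope ring_scope.

Section Defs.
Variable R : realType.
Local Notation C := (R[i]).

Definition seq_cvg (V : zmodType) (nrm : V -> R) (u : nat -> V) (x : V) :=
  forall e : R, 0 < e -> exists N, forall k, (N <= k)%N -> nrm (u k - x) < e.

Definition seq_cauchy (V : zmodType) (nrm : V -> R) (u : nat -> V) :=
  forall e : R, 0 < e -> exists N, forall k l, (N <= k)%N -> (N <= l)%N ->
    nrm (u k - u l) < e.

Definition is_complete (V : zmodType) (nrm : V -> R) :=
  forall u : nat -> V, seq_cauchy nrm u -> exists x, seq_cvg nrm u x.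

Definition is_norm (V : lmodType C) (nrm : V -> R) :=
  [/\ forall x, 0 <= nrm x,
      forall x, nrm x = 0 -> x = 0,
      forall (c : C) x, nrm (c *: x) = ComplexField.Normc.normc c * nrm x &
      forall x y, nrm (x + y) <= nrm x + nrm y].

(** * Unital C*-algebra (A0, mul, I, star, n0)  (I = 0 is not excluded) *)
Definition is_unital_Cstar_algebra (A0 : lmodType C) (mul : A0 -> A0 -> A0)
    (I : A0) (star : A0 -> A0) (n0 : A0 -> R) :=
  [/\ (forall a b d, mul (mul a b) d = mul a (mul b d)),
      (forall (c : C) a b d, mul (c *: a + b) d = c *: mul a d + mul b d),
      (forall (c : C) a b d, mul d (c *: a + b) = c *: mul d a + mul d b) &
      (forall a, mul I a = a /\ mul a I = a)] /\
  [/\ (forall (c : C) a b, star (c *: a + b) = conjc c *: star a + star b),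
      (forall a, star (star a) = a) &
      (forall a b, star (mul a b) = mul (star b) (star a))] /\
  [/\ is_norm n0,
      forall a b, n0 (mul a b) <= n0 a * n0 b,
      forall a, n0 (mul (star a) a) = n0 a ^+ 2 &
      is_complete n0].

Definition is_CQ_norm (A0 : lmodType C) (mul : A0 -> A0 -> A0)
    (star : A0 -> A0) (n0 n : A0 -> R) :=
  [/\ is_norm n,
      forall a, n a <= n0 a,
      forall a b, n (mul a b) <= n a * n0 b &
      forall a, n (star a) = n a].

Definition is_completion (A0 : lmodType C) (n : A0 -> R)
    (A : lmodType C) (nA : A -> R) (j : A0 -> A) :=
  [/\ forall (c : C) a b, j (c *: a + b) = c *: j a + j b,
      is_norm nA,
      forall a, nA (j a) = n a,
      is_complete nA &
      forall X : A, exists u : nat -> A0, seq_cvg nA (fun k => j (u k)) X].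

(** the bimodule operations and involution of A, defined by
    XA := lim A_n A, AX := lim A A_n, X^* := lim A_n^* *)
Definition CQ_operations (A0 : lmodType C) (mul : A0 -> A0 -> A0)
    (star : A0 -> A0) (A : lmodType C) (nA : A -> R) (j : A0 -> A)
    (mulAr : A -> A0 -> A) (mulAl : A0 -> A -> A) (starA : A -> A) :=
  forall (X : A) (u : nat -> A0), seq_cvg nA (fun k => j (u k)) X ->
    [/\ forall a, seq_cvg nA (fun k => j (mul (u k) a)) (mulAr X a),
        forall a, seq_cvg nA (fun k => j (mul a (u k))) (mulAl a X) &
        seq_cvg nA (fun k => j (star (u k))) (starA X)].

Definition cont_positive_functional (A0 : lmodType C) (mul : A0 -> A0 -> A0)
    (star : A0 -> A0) (n : A0 -> R) (omega : A0 -> C) :=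
  [/\ forall (c : C) a b, omega (c *: a + b) = c * omega a + omega b,
      forall a, 0 <= omega (mul (star a) a) &
      exists gamma : R, 0 < gamma /\ forall a, ComplexField.Normc.normc (omega a) <= gamma * n a].

(** Hilbert space (H, ip), inner product linear in the first variable *)
Definition hnorm (H : lmodType C) (ip : H -> H -> C) (x : H) : R :=
  Num.sqrt (complex.Re (ip x x)).

Definition is_Hilbert (H : lmodType C) (ip : H -> H -> C) :=
  [/\ forall (c : C) x y z, ip (c *: x + y) z = c * ip x z + ip y z,
      forall x y, ip x y = conjc (ip y x),
      forall x, 0 <= ip x x,
      forall x, ip x x = 0 -> x = 0 &
      is_complete (hnorm ip)].

Definition is_GNS (A0 : lmodType C) (mul : A0 -> A0 -> A0) (star : A0 -> A0)
    (omega : A0 -> C) (H : lmodType C) (ip : H -> H -> C)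
    (lam : A0 -> H) (pi : A0 -> H -> H) :=
  [/\ is_Hilbert ip,
      forall (c : C) a b, lam (c *: a + b) = c *: lam a + lam b,
      forall (x : H) (e : R), 0 < e -> exists a, hnorm ip (x - lam a) < e,
      forall a b, ip (lam a) (lam b) = omega (mul (star b) a) &
      forall a, [/\ forall (c : C) x y, pi a (c *: x + y) = c *: pi a x + pi a y,
                    exists M : R, forall x, hnorm ip (pi a x) <= M * hnorm ip x &
                    forall b, pi a (lam b) = lam (mul a b)]].

(** * Unbounded vectors on D = lam(A0).
   An element of v(D) is represented by a function H -> C, only its values
   on D being relevant; a vector xi of H is identified with (xi | .).
   An element of L(D, v(D)) is represented by X : H -> H -> C,
   <X xi, eta> := X xi eta (xi, eta in D). *)
Definition inD (A0 : lmodType C) (H : lmodType C) (lam : A0 -> H) (x : H) :=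
  exists b, x = lam b.

Definition in_vD (A0 H : lmodType C) (lam : A0 -> H) (f : H -> C) :=
  forall (c : C) x y, inD lam x -> inD lam y ->
    f (c *: x + y) = conjc c * f x + f y.

Definition in_LDvD (A0 H : lmodType C) (lam : A0 -> H) (X : H -> H -> C) :=
  (forall xi, inD lam xi -> in_vD lam (X xi)) /\
  (forall (c : C) xi eta zeta, inD lam xi -> inD lam eta -> inD lam zeta ->
     X (c *: xi + eta) zeta = c * X xi zeta + X eta zeta).

(** T (restricted to D) is in L^dagger(D), with adjoint Td (restricted to D) *)
Definition in_Ldag (A0 H : lmodType C) (ip : H -> H -> C) (lam : A0 -> H)
    (T Td : H -> H) :=
  [/\ forall x, inD lam x -> inD lam (T x),
      forall x, inD lam x -> inD lam (Td x),
      forall (c : C) x y, inD lam x -> inD lam y ->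
        T (c *: x + y) = c *: T x + T y &
      forall x y, inD lam x -> inD lam y -> ip (T x) y = ip x (Td y)].

Definition is_star_rep (A0 : lmodType C) (A : lmodType C) (j : A0 -> A)
    (mulAr : A -> A0 -> A) (mulAl : A0 -> A -> A) (starA : A -> A)
    (H : lmodType C) (ip : H -> H -> C) (lam : A0 -> H)
    (pibar : A -> H -> H -> C) :=
  [/\ forall X, in_LDvD lam (pibar X),
      forall (c : C) X Y xi eta, inD lam xi -> inD lam eta ->
        pibar (c *: X + Y) xi eta = c * pibar X xi eta + pibar Y xi eta,
      forall a : A0, exists T Td : H -> H,
        [/\ in_Ldag ip lam T Td,
            forall xi eta, inD lam xi -> inD lam eta ->
              pibar (j a) xi eta = ip (T xi) eta,
            forall X xi eta, inD lam xi -> inD lam eta ->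
              pibar (mulAl a X) xi eta = pibar X xi (Td eta) &
            forall X xi eta, inD lam xi -> inD lam eta ->
              pibar (mulAr X a) xi eta = pibar X (T xi) eta] &
      forall X xi eta, inD lam xi -> inD lam eta ->
        pibar (starA X) xi eta = conjc (pibar X eta xi)].

End Defs.

(* Since omega is continuous for ||.||, it extends by continuity to the
   completion A.  For xi = lam a, eta = lam b and j (u k) -> X one has
   (pi (u k) xi | eta) = omega (b^* u_k a), and b^* u_k a -> b^* X a in A, so
   these numbers converge to the same limit along every approximation of X;
   that limit is pibar X xi eta.  Each identity required of a
   *-representation holds for pi on A0 and passes to the limit, and
   lambar X := pibar X (lam I). *)
From HB Require Import structures.
From mathcomp Require Import all_boot all_order all_algebra.
From mathcomp Require Import reals complex.
From mathcomp Require Import topology normedtype.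
From Stdlib Require Import ClassicalEpsilon.
Import Order.TTheory GRing.Theory Num.Theory numFieldNormedType.Exports.
Import ComplexField.Normc.
Local Open Scope ring_scope.
Set Implicit Arguments.
Unset Strict Implicit.
Unset Printing Implicit Defensive.

Section EventuallySmall.
Variable R : realType.

(* [seq_cvg nrm u x] is by definition [eventually_small (fun k => nrm (u k - x))]. *)
Definition eventually_small (d : nat -> R) :=
  forall e : R, 0 < e -> exists N, forall k, (N <= k)%N -> d k < e.

Lemma eventually_smallD d1 d2 :
  eventually_small d1 -> eventually_small d2 ->
  eventually_small (fun k => d1 k + d2 k).
Proof.
move=> h1 h2 e e_gt0; have e2_gt0 : 0 < e / 2 by rewrite divr_gt0.
have [N1 HN1] := h1 _ e2_gt0; have [N2 HN2] := h2 _ e2_gt0.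
exists (maxn N1 N2) => k; rewrite geq_max => /andP[k1 k2].
by rewrite [e]splitr ltrD ?HN1 ?HN2.
Qed.

Lemma eventually_small_le d d' :
  (forall k, d' k <= d k) -> eventually_small d -> eventually_small d'.
Proof.
move=> le_d'd h e e_gt0; have [N HN] := h e e_gt0.
by exists N => k k_ge; apply: le_lt_trans (le_d'd k) (HN k k_ge).
Qed.

Lemma eventually_smallZ K d :
  0 < K -> eventually_small d -> eventually_small (fun k => K * d k).
Proof.
move=> K_gt0 h e e_gt0; have [N HN] := h _ (divr_gt0 e_gt0 K_gt0).
by exists N => k k_ge; rewrite mulrC -ltr_pdivlMr // HN.
Qed.

Lemma eventually_small_cst_le0 c : eventually_small (fun _ => c) -> c <= 0.
Proof.
move=> h; rewrite leNgt; apply/negP => c_gt0.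
by have [N /(_ N (leqnn N))] := h c c_gt0; rewrite ltxx.
Qed.

End EventuallySmall.

Section SeminormConvergence.
Variables (R : realType) (V : zmodType) (nrm : V -> R).
Hypotheses (nrmD : forall x y, nrm (x + y) <= nrm x + nrm y)
  (nrmN : forall x, nrm (- x) = nrm x).

Lemma dist_triangle a b c : nrm (a - b) <= nrm (a - c) + nrm (b - c).
Proof.
have -> : a - b = (a - c) + - (b - c) by rewrite opprB addrA subrK.
by rewrite -(nrmN (b - c)) nrmD.
Qed.

Lemma seq_cvgD (u v : nat -> V) x y :
  seq_cvg nrm u x -> seq_cvg nrm v y ->
  seq_cvg nrm (fun k => u k + v k) (x + y).
Proof.
move=> hu hv; apply: eventually_small_le (eventually_smallD hu hv) => k.
by rewrite opprD addrACA nrmD.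
Qed.

End SeminormConvergence.

Lemma seq_cvg_lipschitz (R : realType) (V W : zmodType) (nV : V -> R)
    (nW : W -> R) (f : V -> W) (K : R) (u : nat -> V) x :
  (forall x, 0 <= nV x) -> 0 <= K ->
  (forall x y, nW (f x - f y) <= K * nV (x - y)) ->
  seq_cvg nV u x -> seq_cvg nW (fun k => f (u k)) (f x).
Proof.
move=> nV_ge0 K_ge0 f_lip hu.
apply: eventually_small_le (eventually_smallZ (ltr_wpDl K_ge0 ltr01) hu) => k.
by rewrite (le_trans (f_lip _ _)) // ler_wpM2r // lerDl.
Qed.

Lemma seq_cvg_ext (R : realType) (V : zmodType) (nrm : V -> R) (u v : nat -> V) x :
  (forall k, u k = v k) -> seq_cvg nrm u x -> seq_cvg nrm v x.
Proof. by move=> eq_uv hu; apply: eventually_small_le hu => k; rewrite eq_uv. Qed.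

Lemma normc_ge0 (R : rcfType) (z : R[i]) : 0 <= normc z.
Proof. by case: z => a b; apply: sqrtr_ge0. Qed.

Section NormedModule.
Variables (R : realType) (V : lmodType R[i]) (nrm : V -> R).
Hypothesis nrm_norm : is_norm nrm.

Lemma nrm_ge0 x : 0 <= nrm x. Proof. by case: nrm_norm. Qed.
Lemma nrm_eq0 x : nrm x = 0 -> x = 0. Proof. by case: nrm_norm => _ /(_ x). Qed.
Lemma nrmZ c x : nrm (c *: x) = normc c * nrm x. Proof. by case: nrm_norm. Qed.
Lemma nrmD x y : nrm (x + y) <= nrm x + nrm y. Proof. by case: nrm_norm. Qed.
Lemma nrmN x : nrm (- x) = nrm x.
Proof. by rewrite -scaleN1r nrmZ normcN normc1 mul1r. Qed.
Lemma nrm0 : nrm 0 = 0. Proof. by rewrite -(scale0r (0 : V)) nrmZ normc0 mul0r. Qed.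

Lemma seq_cvg_cst x : seq_cvg nrm (fun _ => x) x.
Proof. by move=> e e_gt0; exists 0%N => k _; rewrite subrr nrm0. Qed.

Lemma seq_cvg_comb c (u v : nat -> V) x y :
  seq_cvg nrm u x -> seq_cvg nrm v y ->
  seq_cvg nrm (fun k => c *: u k + v k) (c *: x + y).
Proof.
move=> hu hv; apply: (seq_cvgD nrmD) => //.
apply: (seq_cvg_lipschitz nrm_ge0 (normc_ge0 c)) hu => x' y'.
by rewrite -scalerBr nrmZ.
Qed.

Lemma seq_cvg_uniq (u : nat -> V) x y :
  seq_cvg nrm u x -> seq_cvg nrm u y -> x = y.
Proof.
move=> hx hy; apply/eqP; rewrite -subr_eq0; apply/eqP/nrm_eq0/le_anti.
rewrite nrm_ge0 andbT; apply: eventually_small_cst_le0.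
apply: eventually_small_le (eventually_smallD hx hy) => k.
rewrite -(nrmN (u k - x)) -(nrmN (u k - y)) !opprB.
exact: dist_triangle nrmD nrmN _ _ _.
Qed.

End NormedModule.

Section RealCompleteness.
Local Open Scope classical_set_scope.

Lemma real_complete (R : realType) : is_complete (fun x : R => `|x|).
Proof.
move=> u u_cauchy.
have : cauchy (u @ \oo).
  apply: cauchy_exP => e e_gt0; have [N HN] := u_cauchy e e_gt0.
  by exists (u N), N => // k /= k_ge; rewrite /ball /= distrC HN.
move/cauchy_cvgP/cvg_ex => [l /cvgrPdist_lt u_l]; exists l => e e_gt0.
by have [N _ HN] := u_l e e_gt0; exists N => k k_ge; rewrite distrC HN.
Qed.

End RealCompleteness.

Section ComplexScalars.
Variable R : realType.
Implicit Types z w : R[i].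

Lemma normc_is_norm : is_norm (V := R[i]^o) (@normc R).
Proof.
split; [exact: normc_ge0 | exact: eq0_normc | exact: normcM | exact: le_normcD].
Qed.

Lemma normc_conj z : normc (conjc z) = normc z.
Proof. by case: z => a b /=; rewrite sqrrN. Qed.

Lemma normc_ge_Re z : `|complex.Re z| <= normc z.
Proof. by case: z => a b /=; rewrite -sqrtr_sqr ler_wsqrtr // lerDl sqr_ge0. Qed.

Lemma normc_ge_Im z : `|complex.Im z| <= normc z.
Proof. by case: z => a b /=; rewrite -sqrtr_sqr ler_wsqrtr // lerDr sqr_ge0. Qed.

Lemma normc_le_Re_Im z : normc z <= `|complex.Re z| + `|complex.Im z|.
Proof.
case: z => a b /=; rewrite -[X in _ <= X]ger0_norm ?addr_ge0 // -sqrtr_sqr.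
rewrite ler_wsqrtr // sqrrD !real_normK ?num_real // lerD2r lerDl.
by rewrite mulrn_wge0 ?mulr_ge0.
Qed.

Lemma complex_complete : is_complete (@normc R).
Proof.
move=> u u_cauchy.
have part_cauchy (p : R[i] -> R) : (forall z, `|p z| <= normc z) ->
    {morph p : z w / z - w} -> seq_cauchy (fun x : R => `|x|) (fun k => p (u k)).
  move=> p_le pB e e_gt0; have [N HN] := u_cauchy e e_gt0.
  by exists N => k l k_ge l_ge; rewrite -pB (le_lt_trans (p_le _)) ?HN.
have [a ha] := real_complete (part_cauchy _ normc_ge_Re (raddfB (@complex.Re R))).
have [b hb] := real_complete (part_cauchy _ normc_ge_Im (raddfB (@complex.Im R))).
exists (a +i* b)%C; apply: eventually_small_le (eventually_smallD ha hb) => k.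
by rewrite (le_trans (normc_le_Re_Im _)) // raddfB raddfB.
Qed.

Lemma seq_cvg_conj (u : nat -> R[i]) z :
  seq_cvg (@normc R) u z -> seq_cvg (@normc R) (fun k => conjc (u k)) (conjc z).
Proof.
apply: (seq_cvg_lipschitz (@normc_ge0 R) ler01) => x y.
by rewrite mul1r -rmorphB normc_conj.
Qed.

End ComplexScalars.

Lemma linear_sub (R : realType) (U V : lmodType R[i]) (f : U -> V) :
  (forall c a b, f (c *: a + b) = c *: f a + f b) -> {morph f : a b / a - b}.
Proof.
move=> f_lin a b; have -> : a - b = (-1) *: b + a by rewrite scaleN1r addrC.
by rewrite f_lin scaleN1r addrC.
Qed.

Section BoundedAdditiveExtension.
Variables (R : realType) (V W : zmodType) (nW : W -> R) (j : V -> W)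
  (f : V -> R[i]) (g : R).
Hypotheses (nWD : forall x y, nW (x + y) <= nW x + nW y)
  (nWN : forall x, nW (- x) = nW x)
  (jB : {morph j : a b / a - b}) (fB : {morph f : a b / a - b})
  (g_gt0 : 0 < g) (f_bounded : forall a, normc (f a) <= g * nW (j a)).

Lemma bounded_additive_dist a b X :
  normc (f a - f b) <= g * (nW (j a - X) + nW (j b - X)).
Proof.
by rewrite -fB (le_trans (f_bounded _)) // ler_pM2l // jB dist_triangle.
Qed.

Lemma bounded_additive_limit u X : seq_cvg nW (fun k => j (u k)) X ->
  exists z, forall w, seq_cvg nW (fun k => j (w k)) X ->
    seq_cvg (@normc R) (fun k => f (w k)) z.
Proof.
move=> hu; have g_hu := eventually_smallZ g_gt0 hu.
have [z hz] : exists z, seq_cvg (@normc R) (fun k => f (u k)) z.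
  apply: complex_complete => e e_gt0.
  have [N HN] := g_hu _ (divr_gt0 e_gt0 (ltr0Sn _ 1)).
  exists N => k l k_ge l_ge; apply: le_lt_trans (bounded_additive_dist _ _ X) _.
  by rewrite mulrDr [e]splitr ltrD ?HN.
exists z => w hw.
apply: eventually_small_le
  (eventually_smallD (eventually_smallD (eventually_smallZ g_gt0 hw) g_hu) hz) => k.
rewrite -[f (w k)](subrK (f (u k))) -addrA -mulrDr.
by rewrite (le_trans (le_normcD _ _)) // lerD2r bounded_additive_dist.
Qed.

End BoundedAdditiveExtension.

Section GNSExtension.
Variable R : realType.
Local Notation C := R[i].
Local Notation nc := (@normc R).
Variables (A0 : lmodType C) (mul : A0 -> A0 -> A0) (I : A0) (star : A0 -> A0)
  (n0 n : A0 -> R) (A : lmodType C) (nA : A -> R) (j : A0 -> A)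
  (mulAr : A -> A0 -> A) (mulAl : A0 -> A -> A) (starA : A -> A)
  (omega : A0 -> C) (H : lmodType C) (ip : H -> H -> C) (lam : A0 -> H)
  (pi : A0 -> H -> H).
Hypotheses (hC : is_unital_Cstar_algebra mul I star n0)
  (hJ : is_completion n nA j)
  (hO : CQ_operations mul star nA j mulAr mulAl starA)
  (hW : cont_positive_functional mul star n omega)
  (hG : is_GNS mul star omega ip lam pi).

Lemma mulA a b d : mul (mul a b) d = mul a (mul b d).
Proof. by case: hC => -[]. Qed.
Lemma mulDl c a b d : mul (c *: a + b) d = c *: mul a d + mul b d.
Proof. by case: hC => -[]. Qed.
Lemma mul_I a : mul a I = a.
Proof. by case: hC => -[_ _ _ /(_ a)[]]. Qed.
Lemma starK a : star (star a) = a.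
Proof. by case: hC => _ [[]]. Qed.
Lemma starM a b : star (mul a b) = mul (star b) (star a).
Proof. by case: hC => _ [[]]. Qed.

Lemma j_lin c a b : j (c *: a + b) = c *: j a + j b.
Proof. by case: hJ. Qed.
Lemma nA_norm : is_norm nA.
Proof. by case: hJ. Qed.
Lemma nA_j a : nA (j a) = n a.
Proof. by case: hJ. Qed.
Lemma completion_dense X : exists u : nat -> A0, seq_cvg nA (fun k => j (u k)) X.
Proof. by case: hJ. Qed.

Lemma omega_lin c a b : omega (c *: a + b) = c * omega a + omega b.
Proof. by case: hW. Qed.

Lemma ip_linl c x y z : ip (c *: x + y) z = c * ip x z + ip y z.
Proof. by case: hG => -[]. Qed.
Lemma ip_conj x y : ip x y = conjc (ip y x).
Proof. by case: hG => -[]. Qed.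
Lemma lam_lin c a b : lam (c *: a + b) = c *: lam a + lam b.
Proof. by case: hG. Qed.
Lemma ip_lam a b : ip (lam a) (lam b) = omega (mul (star b) a).
Proof. by case: hG. Qed.
Lemma pi_lin a c x y : pi a (c *: x + y) = c *: pi a x + pi a y.
Proof. by case: hG => _ _ _ _ /(_ a)[]. Qed.
Lemma pi_lam a b : pi a (lam b) = lam (mul a b).
Proof. by case: hG => _ _ _ _ /(_ a)[]. Qed.

Lemma ip_antilinr c x y z : ip z (c *: x + y) = conjc c * ip z x + ip z y.
Proof. by rewrite ip_conj ip_linl rmorphD rmorphM /= -!ip_conj. Qed.

Lemma pi_lam_adjoint a b d :
  ip (pi a (lam b)) (lam d) = ip (lam b) (pi (star a) (lam d)).
Proof. by rewrite !pi_lam !ip_lam starM starK mulA. Qed.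

Lemma inD_lin c x y : inD lam x -> inD lam y -> inD lam (c *: x + y).
Proof. by move=> [a ->] [b ->]; exists (c *: a + b); rewrite lam_lin. Qed.

Lemma inD_pi a x : inD lam x -> inD lam (pi a x).
Proof. by move=> [b ->]; exists (mul a b); rewrite pi_lam. Qed.

Lemma omega_limit u X : seq_cvg nA (fun k => j (u k)) X ->
  exists z, forall w, seq_cvg nA (fun k => j (w k)) X ->
    seq_cvg nc (fun k => omega (w k)) z.
Proof.
case: hW => _ _ [g [g_gt0 omega_bounded]].
apply: (bounded_additive_limit (nrmD nA_norm) (nrmN nA_norm)
  (linear_sub j_lin) (linear_sub (V := C^o) omega_lin) g_gt0).
by move=> a; rewrite nA_j.
Qed.

Definition pi_weak_limit (X : A) (xi eta : H) (z : C) :=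
  forall u, seq_cvg nA (fun k => j (u k)) X ->
    seq_cvg nc (fun k => ip (pi (u k) xi) eta) z.

(* Off [D] no weak limit need exist, and [pibar] is then an arbitrary value. *)
Definition pibar (X : A) (xi eta : H) : C :=
  epsilon (inhabits 0) (pi_weak_limit X xi eta).

Definition lambar (X : A) : H -> C := pibar X (lam I).

Lemma pibar_cvg X xi eta u : inD lam xi -> inD lam eta ->
  seq_cvg nA (fun k => j (u k)) X ->
  seq_cvg nc (fun k => ip (pi (u k) xi) eta) (pibar X xi eta).
Proof.
move=> [a ->] [b ->] hu.
have sandwich_cvg w : seq_cvg nA (fun k => j (w k)) X ->
    seq_cvg nA (fun k => j (mul (star b) (mul (w k) a))) (mulAl (star b) (mulAr X a)).
  by move=> hw; have [/(_ a)/hO[_ + _] _ _] := hO hw; apply.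
have [z hz] := omega_limit (sandwich_cvg _ hu).
suff z_lim : pi_weak_limit X (lam a) (lam b) z.
  exact: (epsilon_spec (inhabits 0) (pi_weak_limit X (lam a) (lam b))
    (ex_intro _ z z_lim)) u hu.
move=> w /sandwich_cvg/hz; apply: seq_cvg_ext => k.
by rewrite pi_lam ip_lam.
Qed.

Lemma pibarE X xi eta u z : inD lam xi -> inD lam eta ->
  seq_cvg nA (fun k => j (u k)) X ->
  seq_cvg nc (fun k => ip (pi (u k) xi) eta) z -> pibar X xi eta = z.
Proof.
move=> hxi heta hu; apply: (seq_cvg_uniq (normc_is_norm R)).
exact: pibar_cvg.
Qed.

Lemma pibar_j a xi eta : inD lam xi -> inD lam eta ->
  pibar (j a) xi eta = ip (pi a xi) eta.
Proof.
move=> hxi heta; apply: (pibarE (u := fun=> a) hxi heta).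
  exact: seq_cvg_cst nA_norm _.
exact: seq_cvg_cst (normc_is_norm R) _.
Qed.

Lemma pibar_lin c X Y xi eta : inD lam xi -> inD lam eta ->
  pibar (c *: X + Y) xi eta = c * pibar X xi eta + pibar Y xi eta.
Proof.
move=> hxi heta; have [u hu] := completion_dense X; have [v hv] := completion_dense Y.
apply: (pibarE (u := fun k => c *: u k + v k) hxi heta).
  by apply: seq_cvg_ext (seq_cvg_comb nA_norm c hu hv) => k; rewrite j_lin.
apply: seq_cvg_ext
  (seq_cvg_comb (normc_is_norm R) c (pibar_cvg hxi heta hu) (pibar_cvg hxi heta hv)).
by case: hxi => a -> k; rewrite !pi_lam mulDl lam_lin ip_linl.
Qed.

Lemma pibar_antilinr X xi : inD lam xi -> in_vD lam (pibar X xi).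
Proof.
move=> hxi c eta zeta heta hzeta; have [u hu] := completion_dense X.
apply: (pibarE hxi (inD_lin c heta hzeta) hu).
apply: seq_cvg_ext (seq_cvg_comb (normc_is_norm R) (conjc c)
  (pibar_cvg hxi heta hu) (pibar_cvg hxi hzeta hu)) => k.
by rewrite ip_antilinr.
Qed.

Lemma pibar_LDvD X : in_LDvD lam (pibar X).
Proof.
split=> [xi|c xi eta zeta hxi heta hzeta]; first exact: pibar_antilinr.
have [u hu] := completion_dense X.
apply: (pibarE (inD_lin c hxi heta) hzeta hu).
apply: seq_cvg_ext (seq_cvg_comb (normc_is_norm R) c
  (pibar_cvg hxi hzeta hu) (pibar_cvg heta hzeta hu)) => k.
by rewrite pi_lin ip_linl.
Qed.

Lemma pibar_mulAl a X xi eta : inD lam xi -> inD lam eta ->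
  pibar (mulAl a X) xi eta = pibar X xi (pi (star a) eta).
Proof.
move=> hxi heta; have [u hu] := completion_dense X; have [_ mulAl_cvg _] := hO hu.
apply: (pibarE hxi heta (mulAl_cvg a)).
apply: seq_cvg_ext (pibar_cvg hxi (inD_pi _ heta) hu) => k.
by case: hxi => b ->; case: heta => d ->; rewrite !pi_lam !ip_lam starM starK !mulA.
Qed.

Lemma pibar_mulAr a X xi eta : inD lam xi -> inD lam eta ->
  pibar (mulAr X a) xi eta = pibar X (pi a xi) eta.
Proof.
move=> hxi heta; have [u hu] := completion_dense X; have [mulAr_cvg _ _] := hO hu.
apply: (pibarE hxi heta (mulAr_cvg a)).
apply: seq_cvg_ext (pibar_cvg (inD_pi _ hxi) heta hu) => k.
by case: hxi => b ->; rewrite !pi_lam mulA.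
Qed.

Lemma pibar_starA X xi eta : inD lam xi -> inD lam eta ->
  pibar (starA X) xi eta = conjc (pibar X eta xi).
Proof.
move=> hxi heta; have [u hu] := completion_dense X; have [_ _ starA_cvg] := hO hu.
apply: (pibarE hxi heta starA_cvg).
apply: seq_cvg_ext (seq_cvg_conj (pibar_cvg heta hxi hu)) => k.
by case: hxi => b ->; case: heta => d ->; rewrite -ip_conj pi_lam_adjoint starK.
Qed.

Lemma pi_Ldag a : in_Ldag ip lam (pi a) (pi (star a)).
Proof.
split=> [x|x|c x y _ _|x y]; try exact: inD_pi; first by rewrite pi_lin.
by case=> b -> [d ->]; rewrite pi_lam_adjoint.
Qed.

Lemma pibar_star_rep : is_star_rep j mulAr mulAl starA ip lam pibar.
Proof.
split=> [|c X Y xi eta|a|];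
  [exact: pibar_LDvD | exact: pibar_lin | | exact: pibar_starA].
exists (pi a), (pi (star a)); split;
  [exact: pi_Ldag | exact: pibar_j | exact: pibar_mulAl | exact: pibar_mulAr].
Qed.

Lemma lambar_j a eta : inD lam eta -> lambar (j a) eta = ip (lam a) eta.
Proof. by move=> heta; rewrite /lambar pibar_j ?pi_lam ?mul_I //; exists I. Qed.

Lemma lambar_mulAr X B eta : inD lam eta ->
  lambar (mulAr X B) eta = pibar X (lam B) eta.
Proof. by move=> heta; rewrite /lambar pibar_mulAr ?pi_lam ?mul_I //; exists I. Qed.

End GNSExtension.
Theorem proposition3p2 (R : realType)
  (A0 : lmodType R[i]) (mul : A0 -> A0 -> A0) (I : A0) (star : A0 -> A0)
  (n0 n : A0 -> R)
  (A : lmodType R[i]) (nA : A -> R) (j : A0 -> A)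
  (mulAr : A -> A0 -> A) (mulAl : A0 -> A -> A) (starA : A -> A)
  (omega : A0 -> R[i])
  (H : lmodType R[i]) (ip : H -> H -> R[i]) (lam : A0 -> H) (pi : A0 -> H -> H) :
  is_unital_Cstar_algebra mul I star n0 ->
  is_CQ_norm mul star n0 n ->
  is_completion n nA j ->
  CQ_operations mul star nA j mulAr mulAl starA ->
  cont_positive_functional mul star n omega ->
  is_GNS mul star omega ip lam pi ->
  exists (pibar : A -> H -> H -> R[i]) (lambar : A -> H -> R[i]),
    (* (1) *)
    is_star_rep j mulAr mulAl starA ip lam pibar /\
    (forall a xi eta, inD lam xi -> inD lam eta ->
       pibar (j a) xi eta = ip (pi a xi) eta) /\
    (* (2) *)
    (forall X, in_vD lam (lambar X)) /\
    (forall (c : R[i]) X Y eta, inD lam eta ->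
       lambar (c *: X + Y) eta = c * lambar X eta + lambar Y eta) /\
    (forall a eta, inD lam eta -> lambar (j a) eta = ip (lam a) eta) /\
    (forall X B eta, inD lam eta ->
       lambar (mulAr X B) eta = pibar X (lam B) eta).

Proof.
move=> hC _ hJ hO hW hG; have hI : inD lam (lam I) by exists I.
exists (pibar nA j ip pi), (lambar I nA j ip lam pi).
split; first exact: pibar_star_rep hC hJ hO hW hG.
split; first exact: pibar_j hJ hO hW hG.
split; first by move=> X; exact: pibar_antilinr hJ hO hW hG X _ hI.
split; first by move=> c X Y eta; exact: pibar_lin hC hJ hO hW hG c X Y _ _ hI.
split; first exact: lambar_j hC hJ hO hW hG.
exact: lambar_mulAr hC hJ hO hW hG.
Qed.
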